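(* Let $a,A$ be real numbers with $a+3>0$ and $\frac{a+3}{2}=\frac{2}{A+3}$, and let $\xi,\eta,\mu,\mathcal{E},L$ be real numbers. Consider $$U(r)=\xi r^{a+1}+\mu r^{2\left(\sqrt{\frac{a+3}{2}}-1\right)},\qquad V(\rho)=\eta\rho^{A+1}+\mu\rho^{2\left(\sqrt{\frac{A+3}{2}}-1\right)}.$$ Then: (i) $U$ and $V$ are classically Newtonianly dual: if $\xi=-\mathcal{E}$ and $\theta$ satisfies the orbit equation for $U$ with energy $E=-\eta$ and angular momentum $L$ on an open interval $I\subset(0,\infty)$, then $\phi(\rho)=\frac{2}{A+3}\theta\left(\rho^{(A+3)/2}\right)$ satisfies the orbit equation for $V$ with energy $\mathcal{E}$ and angular momentum $L$ on $J=\{\rho>0:\rho^{(A+3)/2}\in I\}$; (ii) the terms $\xi r^{a+1}$ and $\eta\rho^{A+1}$ are Newtonianly dual power potentials, and so are $\mu r^{2(\sqrt{(a+3)/2}-1)}$ and $\mu\rho^{2(\sqrt{(A+3)/2}-1)}$; i.e., writing the second-term exponents as $b+1$ and $B+1$ with $b=2\sqrt{\frac{a+3}{2}}-3$, $B=2\sqrt{\frac{A+3}{2}}-3$, one has $\frac{b+3}{2}=\frac{2}{B+3}$ (as well as $\frac{a+3}{2}=\frac{2}{A+3}$).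
   Context: For a central potential $W$ on $(0,\infty)$, energy $E$ and angular momentum $L$, a differentiable function $\theta$ on an open interval $I\subset(0,\infty)$ satisfies the (classical) orbit equation if for all $r\in I$ the quantity $E-\frac{L^2}{2r^2}-W(r)$ is positive and $\frac{d\theta}{dr}=\frac{L/r^{2}}{\sqrt{2\left[E-\frac{L^{2}}{2r^{2}}-W(r)\right]}}$. Two power potentials $\xi r^{\alpha+1}$ and $\eta\rho^{\beta+1}$ are called Newtonianly dual when $\frac{\alpha+3}{2}=\frac{2}{\beta+3}$. *)

From Stdlib Require Import Reals.
From Coquelicot Require Import Coquelicot.
Open Scope R_scope.

Definition is_open_interval (I : R -> Prop) : Prop :=
  exists lo hi : Rbar, forall r, I r <-> (Rbar_lt lo r /\ Rbar_lt r hi).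

Definition orbit_eq (W : R -> R) (E L : R) (theta : R -> R) (I : R -> Prop) : Prop :=
  forall r, I r ->
    0 < E - L ^ 2 / (2 * r ^ 2) - W r /\
    is_derive theta r ((L / r ^ 2) / sqrt (2 * (E - L ^ 2 / (2 * r ^ 2) - W r))).

(* Power potentials xi r^(alpha+1), eta rho^(beta+1) are Newtonianly dual. *)
Definition newton_dual (alpha beta : R) : Prop :=
  (alpha + 3) / 2 = 2 / (beta + 3).

(** The substitution r = ρ^k, φ(ρ) = θ(ρ^k)/k turns the orbit equation of one
    potential into that of another as soon as the radicands satisfy
    E' - L²/(2ρ²) - W'(ρ) = (r/ρ)² (E - L²/(2r²) - W(r)): the chain rule
    contributes the same factor r/ρ that the square root extracts.  Writing
    (A+3)/2 = s², so that (a+3)/2 = 1/s², and taking k = s², the factor (r/ρ)²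
    sends a power term c r^p to c ρ^(s²(p+2)-2); hence the energy -η becomes
    the term η ρ^(A+1), the term -ℰ r^(a+1) becomes the energy ℰ, and the
    exponent 2(1/s - 1) becomes 2(s - 1). *)
From Stdlib Require Import Reals Lra.
From Coquelicot Require Import Coquelicot.
Open Scope R_scope.

Lemma newton_dual_inv (t : R) : t <> 0 -> newton_dual (2 / t - 3) (2 * t - 3).
Proof. intros ht; unfold newton_dual; field; split; [lra | exact ht]. Qed.

Lemma newton_dual_param (a A : R) :
  0 < a + 3 -> newton_dual a A ->
  exists s, 0 < s /\ a = 2 / s ^ 2 - 3 /\ A = 2 * s ^ 2 - 3.
Proof.
  unfold newton_dual; intros Ha HaA.
  assert (HA0 : A + 3 <> 0).
  { intros h; rewrite h, Rdiv_0_r in HaA; lra. }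
  assert (HA : 0 < A + 3).
  { assert (Hprod : (a + 3) / 2 * (A + 3) = 2) by (rewrite HaA; field; exact HA0).
    nra. }
  exists (sqrt ((A + 3) / 2)).
  rewrite pow2_sqrt by lra.
  split; [apply sqrt_lt_R0; lra |].
  split; [| field].
  replace a with (2 * ((a + 3) / 2) - 3) by field.
  rewrite HaA; field; lra.
Qed.

Lemma Rpower_pos (x y : R) : 0 < Rpower x y.
Proof. apply exp_pos. Qed.

Lemma Rpower_minus_1 (x y : R) : 0 < x -> Rpower x (y - 1) = Rpower x y / x.
Proof.
  intros hx.
  replace (Rpower x y) with (Rpower x (y - 1 + 1)) by (f_equal; ring).
  rewrite Rpower_plus, Rpower_1 by exact hx.
  field; lra.
Qed.

Lemma is_derive_Rpower (x y : R) :
  0 < x -> is_derive (fun t => Rpower t y) x (y * (Rpower x y / x)).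
Proof.
  intros hx; rewrite <- Rpower_minus_1 by exact hx.
  apply is_derive_Reals, derivable_pt_lim_power, hx.
Qed.

Lemma Rpower_subst_term (k p rho : R) :
  0 < rho ->
  (Rpower rho k / rho) ^ 2 * Rpower (Rpower rho k) p = Rpower rho (k * (p + 2) - 2).
Proof.
  intros hrho.
  rewrite <- Rpower_minus_1, Rpower_mult by exact hrho.
  simpl; rewrite Rmult_1_r, <- !Rpower_plus.
  f_equal; ring.
Qed.

Lemma sqrt_mult_sq (q x : R) : 0 <= q -> sqrt (q ^ 2 * x) = q * sqrt x.
Proof.
  intros hq.
  rewrite sqrt_mult_alt by apply pow2_ge_0.
  rewrite sqrt_pow2 by exact hq; reflexivity.
Qed.

Lemma orbit_eq_Rpower_subst (W W' : R -> R) (E E' L k : R)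
    (theta : R -> R) (I : R -> Prop) :
  k <> 0 ->
  (forall rho, 0 < rho ->
     E' - L ^ 2 / (2 * rho ^ 2) - W' rho =
     (Rpower rho k / rho) ^ 2 *
       (E - L ^ 2 / (2 * Rpower rho k ^ 2) - W (Rpower rho k))) ->
  orbit_eq W E L theta I ->
  orbit_eq W' E' L (fun rho => / k * theta (Rpower rho k))
    (fun rho => 0 < rho /\ I (Rpower rho k)).
Proof.
  intros hk hrad horb rho [hrho hI].
  destruct (horb _ hI) as [hX hder].
  rewrite hrad by exact hrho.
  set (r := Rpower rho k) in *.
  set (X := E - L ^ 2 / (2 * r ^ 2) - W r) in *.
  assert (hr : 0 < r) by apply Rpower_pos.
  assert (hq : 0 < r / rho) by (apply Rdiv_lt_0_compat; assumption).
  split; [apply Rmult_lt_0_compat; [apply pow_lt |]; assumption |].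
  replace (2 * ((r / rho) ^ 2 * X)) with ((r / rho) ^ 2 * (2 * X)) by ring.
  rewrite sqrt_mult_sq by lra.
  assert (hsqrt : 0 < sqrt (2 * X)) by (apply sqrt_lt_R0; lra).
  pose proof (is_derive_comp theta (fun t => Rpower t k) rho _ _ hder
                (is_derive_Rpower rho k hrho)) as hcomp.
  apply is_derive_scal with (k := / k) in hcomp.
  replace (L / rho ^ 2 / (r / rho * sqrt (2 * X)))
    with (/ k * scal (k * (r / rho)) (L / r ^ 2 / sqrt (2 * X))); [exact hcomp |].
  unfold scal; simpl; unfold mult; simpl.
  field; repeat split; lra.
Qed.

Lemma radicand_Rpower_subst (s eta calE mu L rho : R) :
  s <> 0 -> 0 < rho ->
  let r := Rpower rho (s ^ 2) in
  calE - L ^ 2 / (2 * rho ^ 2) -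
    (eta * Rpower rho (2 * s ^ 2 - 2) + mu * Rpower rho (2 * (s - 1))) =
  (r / rho) ^ 2 *
    (- eta - L ^ 2 / (2 * r ^ 2) -
     (- calE * Rpower r (2 / s ^ 2 - 2) + mu * Rpower r (2 * (/ s - 1)))).
Proof.
  intros hs hrho r.
  assert (hr : 0 < r) by apply Rpower_pos.
  assert (h_eta : (r / rho) ^ 2 = Rpower rho (2 * s ^ 2 - 2)).
  { rewrite <- (Rmult_1_r ((r / rho) ^ 2)), <- (Rpower_O r hr).
    unfold r; rewrite Rpower_subst_term by exact hrho; f_equal; ring. }
  assert (h_calE : (r / rho) ^ 2 * Rpower r (2 / s ^ 2 - 2) = 1).
  { unfold r; rewrite Rpower_subst_term, <- (Rpower_O rho hrho) by exact hrho.
    f_equal; field; exact hs. }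
  assert (h_mu : (r / rho) ^ 2 * Rpower r (2 * (/ s - 1)) = Rpower rho (2 * (s - 1))).
  { unfold r; rewrite Rpower_subst_term by exact hrho; f_equal; field; exact hs. }
  assert (h_L : (r / rho) ^ 2 * (L ^ 2 / (2 * r ^ 2)) = L ^ 2 / (2 * rho ^ 2))
    by (field; lra).
  rewrite <- h_eta, <- h_mu, <- h_L.
  replace calE with (calE * ((r / rho) ^ 2 * Rpower r (2 / s ^ 2 - 2))) at 1
    by (rewrite h_calE; ring).
  ring.
Qed.

Theorem mainTheorem2 (a A xi eta mu calE L : R) :
  0 < a + 3 ->
  (a + 3) / 2 = 2 / (A + 3) ->
  let U := fun r => xi * Rpower r (a + 1) + mu * Rpower r (2 * (sqrt ((a + 3) / 2) - 1)) in
  let V := fun rho => eta * Rpower rho (A + 1) + mu * Rpower rho (2 * (sqrt ((A + 3) / 2) - 1)) in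
  (* (i) classical Newtonian duality of U and V *)
  (forall (theta : R -> R) (I : R -> Prop),
     is_open_interval I ->
     (forall r, I r -> 0 < r) ->
     xi = - calE ->
     orbit_eq U (- eta) L theta I ->
     orbit_eq V calE L
       (fun rho => 2 / (A + 3) * theta (Rpower rho ((A + 3) / 2)))
       (fun rho => 0 < rho /\ I (Rpower rho ((A + 3) / 2)))) /\
  (* (ii) termwise Newtonian duality of the power potentials *)
  (newton_dual a A /\
   newton_dual (2 * sqrt ((a + 3) / 2) - 3) (2 * sqrt ((A + 3) / 2) - 3)).
Proof.
  intros Ha HaA U V.
  destruct (newton_dual_param a A Ha HaA) as [s [hs [-> ->]]].
  assert (hs2 : s ^ 2 <> 0) by (apply pow_nonzero; lra).
  assert (h_sqrt_a : sqrt ((2 / s ^ 2 - 3 + 3) / 2) = / s).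
  { replace ((2 / s ^ 2 - 3 + 3) / 2) with ((/ s) ^ 2) by (field; lra).
    apply sqrt_pow2, Rlt_le, Rinv_0_lt_compat, hs. }
  assert (h_sqrt_A : sqrt ((2 * s ^ 2 - 3 + 3) / 2) = s).
  { replace ((2 * s ^ 2 - 3 + 3) / 2) with (s ^ 2) by field.
    apply sqrt_pow2; lra. }
  subst U V; rewrite h_sqrt_a, h_sqrt_A.
  split; [| split; [apply newton_dual_inv, hs2 | apply (newton_dual_inv s); lra]].
  intros theta I _ _ -> horb.
  replace (2 / (2 * s ^ 2 - 3 + 3)) with (/ s ^ 2) by (field; lra).
  replace ((2 * s ^ 2 - 3 + 3) / 2) with (s ^ 2) by field.
  eapply orbit_eq_Rpower_subst; [exact hs2 | | exact horb].
  intros rho hrho; cbv beta.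
  replace (2 / s ^ 2 - 3 + 1) with (2 / s ^ 2 - 2) by ring.
  replace (2 * s ^ 2 - 3 + 1) with (2 * s ^ 2 - 2) by ring.
  apply radicand_Rpower_subst; lra.
Qed.
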